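(* Let $K$ be an algebraically closed field, $Q$ a quiver with vertex set $I$, $v\in I$ and $\lambda\in K^I$. Let $Q_\infty$ be the quiver obtained from $Q$ by adjoining a new vertex $\infty$ and a new arrow $a\colon\infty\to v$, and extend $\lambda$ to $K^{I\cup\{\infty\}}$ by $\lambda_\infty=0$. Let $S(\infty)$ be the simple $\Pi^\lambda Q_\infty$-module which is one-dimensional at $\infty$ and zero at all other vertices, and let $\mathcal C$ be the category of $\Pi^\lambda Q_\infty$-modules $X$ with $\operatorname{Hom}(X,S(\infty))=\operatorname{Hom}(S(\infty),X)=0$. Then the forgetful functor from representations of $\overline{Q_\infty}$ to representations of $\bar Q$ (forgetting the vertex $\infty$ and the arrows $a,a^*$) induces an equivalence from the full subcategory of finite-dimensional $X\in\mathcal C$ with $\dim X_\infty\le 1$ to the category of nearly representations of $\Pi^\lambda Q$ with respect to $v$.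
   Context: For a quiver $Q$ with vertex set $I$, each arrow $a$ has tail $t(a)$ and head $h(a)$. The double $\bar Q$ is obtained by adjoining an arrow $a^*\colon h(a)\to t(a)$ for each arrow $a$ of $Q$. For $\lambda\in K^I$ and a finite-dimensional representation $X$ of $\bar Q$ define, for each $i\in I$, $$X_{c,i}=\sum_{a\in Q,\,h(a)=i}X_aX_{a^*}-\sum_{a\in Q,\,t(a)=i}X_{a^*}X_a-\lambda_i 1_{X_i}.$$ The deformed preprojective algebra $\Pi^\lambda Q$ is $K\bar Q$ modulo the relation $\sum_{a\in Q}(aa^*-a^*a)-\sum_i\lambda_ie_i$; its modules are the representations $X$ of $\bar Q$ with $X_{c,i}=0$ for all $i$. Write $\lambda\cdot\alpha=\sum_i\lambda_i\alpha_i$. A nearly representation of $\Pi^\lambda Q$ (with respect to $v$) is a finite-dimensional representation $X$ of $\bar Q$ with $\lambda\cdot\underline{\dim}\,X=0$, $X_{c,i}=0$ for all $i\ne v$, and $\operatorname{rank}(X_{c,v})\le 1$; morphisms of nearly representations are morphisms of $\bar Q$-representations. *)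

From HB Require Import structures.
From mathcomp Require Import all_boot all_order all_algebra.
Set Implicit Arguments. Unset Strict Implicit. Unset Printing Implicit Defensive.
Import GRing.Theory.
Local Open Scope ring_scope.

Record quiver := Quiver {
  vertex : finType;
  arrow : finType;
  qtail : arrow -> vertex;
  qhead : arrow -> vertex }.

(* Q_infty: new vertex None (= infinity) and new arrow None : infinity -> v. *)
Definition quiver_inf (Q : quiver) (v : vertex Q) : quiver :=
  @Quiver (option (vertex Q) : finType) (option (arrow Q) : finType)
    (fun o => match o with None => None | Some a => Some (qtail a) end)
    (fun o => match o with None => Some v | Some a => Some (qhead a) end).

Definition lam_inf (K : fieldType) (Q : quiver) (lam : vertex Q -> K)
  : option (vertex Q) -> K :=
  fun o => match o with None => 0 | Some i => lam i end.

(* Convention: spaces are K^(rdim i) as row vectors; the linear map of an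
   arrow b : i -> j is a matrix of size rdim i x rdim j acting on the right.
   rA a represents X_a : X_(t a) -> X_(h a) and rS a represents
   X_{a star} : X_(h a) -> X_(t a). *)
Record drep (K : fieldType) (Q : quiver) := DRep {
  rdim : vertex Q -> nat;
  rA : forall a : arrow Q, 'M[K]_(rdim (qtail a), rdim (qhead a));
  rS : forall a : arrow Q, 'M[K]_(rdim (qhead a), rdim (qtail a)) }.

Definition mx_at (K : fieldType) (V : eqType) (d : V -> nat) (i j : V)
  (m : 'M[K]_(d j)) : 'M[K]_(d i) :=
  if j =P i is ReflectT e then castmx (f_equal d e, f_equal d e) m else 0.

(* X_{c,i} = sum_{h a = i} X_a X_{a star} - sum_{t a = i} X_{a star} X_a - lam_i 1.
   With right action, X_a X_{a star} (first a star, then a) is rS a *m rA a. *)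
Definition Xc (K : fieldType) (Q : quiver) (lam : vertex Q -> K)
  (X : drep K Q) (i : vertex Q) : 'M[K]_(rdim X i) :=
  \sum_(a : arrow Q) @mx_at K _ (rdim X) i _ (rS X a *m rA X a)
  - \sum_(a : arrow Q) @mx_at K _ (rdim X) i _ (rA X a *m rS X a)
  - (lam i)%:M.

Definition is_module (K : fieldType) (Q : quiver) (lam : vertex Q -> K)
  (X : drep K Q) : Prop := forall i, Xc lam X i = 0.

Definition is_hom (K : fieldType) (Q : quiver) (X Y : drep K Q)
  (f : forall i, 'M[K]_(rdim X i, rdim Y i)) : Prop :=
  forall a : arrow Q,
    rA X a *m f (qhead a) = f (qtail a) *m rA Y a /\
    rS X a *m f (qtail a) = f (qhead a) *m rS Y a.

Definition is_iso (K : fieldType) (Q : quiver) (X Y : drep K Q) : Prop :=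
  exists (f : forall i, 'M[K]_(rdim X i, rdim Y i))
         (g : forall i, 'M[K]_(rdim Y i, rdim X i)),
    [/\ is_hom f, is_hom g,
        forall i, f i *m g i = 1%:M & forall i, g i *m f i = 1%:M].

Definition lam_dot (K : fieldType) (Q : quiver) (lam : vertex Q -> K)
  (X : drep K Q) : K := \sum_(i : vertex Q) lam i * (rdim X i)%:R.

Definition nearly_rep (K : fieldType) (Q : quiver) (lam : vertex Q -> K)
  (v : vertex Q) (X : drep K Q) : Prop :=
  [/\ lam_dot lam X = 0,
      forall i, i != v -> Xc lam X i = 0 &
      (\rank (Xc lam X v) <= 1)%N].

Definition S_inf (K : fieldType) (Q : quiver) (v : vertex Q)
  : drep K (quiver_inf v) :=
  @DRep K (quiver_inf v) (fun o => if o is None then 1%N else 0%N)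
    (fun a => 0) (fun a => 0).

Definition in_C1 (K : fieldType) (Q : quiver) (v : vertex Q)
  (lam : vertex Q -> K) (X : drep K (quiver_inf v)) : Prop :=
  [/\ @is_module K (quiver_inf v) (lam_inf lam) X,
      (forall f, @is_hom K _ X (S_inf K v) f -> forall o, f o = 0),
      (forall f, @is_hom K _ (S_inf K v) X f -> forall o, f o = 0) &
      (rdim X None <= 1)%N].

Definition forget (K : fieldType) (Q : quiver) (v : vertex Q)
  (X : drep K (quiver_inf v)) : drep K Q :=
  @DRep K Q (fun i => rdim X (Some i))
    (fun a => rA X (Some a)) (fun a => rS X (Some a)).

Definition forget_hom (K : fieldType) (Q : quiver) (v : vertex Q)
  (X Y : drep K (quiver_inf v))
  (f : forall o, 'M[K]_(rdim X o, rdim Y o))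
  : forall i, 'M[K]_(rdim (forget X) i, rdim (forget Y) i) :=
  fun i => f (Some i).

From HB Require Import structures.
From mathcomp Require Import all_boot all_order all_algebra zify.
Set Implicit Arguments.
Unset Strict Implicit.
Unset Printing Implicit Defensive.
Import GRing.Theory.
Local Open Scope ring_scope.

(* A representation X of the double of Q_oo is a representation of the double
   of Q together with a space X_oo and maps a : X_oo -> X_v, a* : X_v -> X_oo.
   Morphisms from S(oo) to X are vectors of X_oo killed by a, morphisms from X
   to S(oo) are functionals on X_oo killing the image of a*; so X is in C iff
   a is injective and a* surjective.  Then X_{c,v} of the restriction is
   -a a*, of rank at most dim X_oo <= 1, and the trace of the relation, summed
   over all vertices, gives lam . dim = 0.  Conversely a nearly representation
   N is extended by a rank factorisation X_{c,v} N = C R with X_oo of dimension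
   rank X_{c,v} N, a = R and a* = -C; the relation at oo holds because
   tr (R C) = tr X_{c,v} N = 0.  Injectivity of a and surjectivity of a* make
   the oo-component of a morphism unique, and they allow it to be built from
   the v-component, which gives fullness. *)

Lemma sum_option (R : nmodType) (T : finType) (F : option T -> R) :
  \sum_(o : option T) F o = F None + \sum_(i : T) F (Some i).
Proof.
rewrite (bigD1 None) //=; congr (_ + _).
rewrite (reindex_omap Some id) /=; last by case.
by apply: eq_bigl => j; rewrite eqxx.
Qed.

Section MatrixFacts.
Variable K : fieldType.

Lemma flatmx_eq m n (A B : 'M[K]_(m, n)) : m = 0%N -> A = B.
Proof. by move=> e; move: A B; rewrite e => A B; rewrite !flatmx0. Qed.

Lemma thinmx_eq m n (A B : 'M[K]_(m, n)) : n = 0%N -> A = B.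
Proof. by move=> e; move: A B; rewrite e => A B; rewrite !thinmx0. Qed.

Lemma mulmx_thin0 m k p (A : 'M[K]_(m, k)) (B : 'M[K]_(k, p)) :
  k = 0%N -> A *m B = 0.
Proof. by move=> e; rewrite (@thinmx_eq m k A 0) ?mul0mx. Qed.

Lemma mxtraceN n (A : 'M[K]_n) : \tr (- A) = - \tr A.
Proof. exact: raddfN. Qed.

Lemma mxtrace_sum n (I : finType) (F : I -> 'M[K]_n) :
  \tr (\sum_i F i) = \sum_i \tr (F i).
Proof. exact: raddf_sum. Qed.

Lemma mx_le1_trace0 n (B : 'M[K]_n) : (n <= 1)%N -> \tr B = 0 -> B = 0.
Proof.
move=> n_le1 trB0.
have ord_eq (i j : 'I_n) : i = j.
  by apply: ord_inj; have := ltn_ord i; have := ltn_ord j; lia.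
apply/matrixP => i j; rewrite -(ord_eq i j) [RHS]mxE.
move: trB0; rewrite /mxtrace (bigD1 i) //= big1 ?addr0 // => k ne_ki.
by rewrite (ord_eq k i) eqxx in ne_ki.
Qed.

Lemma row_free_nz_ker m n (A : 'M[K]_(m, n)) :
  ~~ row_free A -> exists2 x : 'rV[K]_m, x != 0 & x *m A = 0.
Proof.
move=> notfree; exists (nz_row (kermx A)); first by rewrite nz_row_eq0 kermx_eq0.
exact/sub_kermxP/nz_row_sub.
Qed.

(* With S left invertible (full column rank) and A' right invertible, the
   connecting map c := S^-1 h S' does the job. *)
Lemma factor_through_free m n p q (A : 'M[K]_(m, n)) (S : 'M[K]_(n, m))
    (A' : 'M[K]_(p, q)) (S' : 'M[K]_(q, p)) (h : 'M[K]_(n, q)) :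
    row_free S^T -> row_free A' -> S *m A *m h = h *m S' *m A' ->
  exists c : 'M[K]_(m, p), A *m h = c *m A' /\ S *m c = h *m S'.
Proof.
move=> freeST freeA' E.
pose L := (pinvmx S^T)^T.
have LS : L *m S = 1%:M by rewrite -[S]trmxK -trmx_mul (mulmxVp freeST) trmx1.
have A'R : A' *m pinvmx A' = 1%:M := mulmxVp freeA'.
exists (L *m h *m S').
have Ah : A *m h = L *m h *m S' *m A'.
  by rewrite -[LHS]mul1mx -LS -!mulmxA (mulmxA S) E !mulmxA.
split=> //.
by rewrite -[LHS]mulmx1 -A'R mulmxA -(mulmxA S) -Ah mulmxA E -mulmxA A'R mulmx1.
Qed.

End MatrixFacts.

Section MxAt.
Variables (K : fieldType) (V : eqType) (d : V -> nat).

Lemma mx_at_id i (m : 'M[K]_(d i)) : @mx_at K V d i i m = m.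
Proof. by rewrite /mx_at; case: eqP => // e; rewrite castmx_id. Qed.

Lemma mx_at_neq i j (m : 'M[K]_(d j)) : j != i -> @mx_at K V d i j m = 0.
Proof. by move=> ne; rewrite /mx_at; case: eqP => // e; rewrite e eqxx in ne. Qed.

End MxAt.

Lemma mx_at_Some (K : fieldType) (T : finType) (d : option T -> nat) (i j : T)
  (m : 'M[K]_(d (Some j))) :
  @mx_at K _ d (Some i) (Some j) m = @mx_at K _ (fun k => d (Some k)) i j m.
Proof. by case: (eqVneq j i) => [<-|ne]; rewrite ?mx_at_id // !mx_at_neq. Qed.

Lemma sum_trace_mx_at (K : fieldType) (V : finType) (d : V -> nat) (j : V)
  (m : 'M[K]_(d j)) : \sum_(i : V) \tr (@mx_at K V d i j m) = \tr m.
Proof.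
rewrite (bigD1 j) //= mx_at_id big1 ?addr0 // => i ne.
by rewrite mx_at_neq 1?eq_sym // mxtrace0.
Qed.

Section Relations.
Variables (K : fieldType) (Q : quiver) (lam : vertex Q -> K).

Lemma sum_trace_Xc (X : drep K Q) :
  \sum_(i : vertex Q) \tr (Xc lam X i) = - lam_dot lam X.
Proof.
rewrite /Xc /lam_dot.
under eq_bigr do rewrite !mxtraceD !mxtraceN !mxtrace_sum mxtrace_scalar -mulr_natr.
rewrite !sumrB [X in X - _ - _]exchange_big [X in _ - X - _]exchange_big /=.
under eq_bigr do rewrite sum_trace_mx_at.
under [X in _ - X - _]eq_bigr do rewrite sum_trace_mx_at.
under eq_bigr do rewrite mxtrace_mulC.
by rewrite subrr sub0r.
Qed.

Lemma module_lam_dot0 (X : drep K Q) : is_module lam X -> lam_dot lam X = 0.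
Proof.
move=> Xmod; apply/eqP; rewrite -oppr_eq0 -sum_trace_Xc; apply/eqP.
by apply: big1 => i _; rewrite Xmod mxtrace0.
Qed.

Lemma nearly_rep_trace_Xc (v : vertex Q) (N : drep K Q) :
  nearly_rep lam v N -> \tr (Xc lam N v) = 0.
Proof.
case=> lamN0 XcN0 _; have := sum_trace_Xc N.
rewrite lamN0 oppr0 (bigD1 v) //= big1 ?addr0 // => i ne.
by rewrite XcN0 // mxtrace0.
Qed.

Lemma Xc_hom_comm (X Y : drep K Q) (h : forall i, 'M[K]_(rdim X i, rdim Y i)) :
  is_hom h -> forall i, Xc lam X i *m h i = h i *m Xc lam Y i.
Proof.
move=> hom_h i; rewrite /Xc !mulmxBl !mulmxBr !mulmx_suml !mulmx_sumr.
rewrite mul_scalar_mx mul_mx_scalar.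
congr (_ - _ - _); apply: eq_bigr => a _; have [hA hS] := hom_h a.
- case: (eqVneq (qhead a) i) => [<-|ne]; last by rewrite !mx_at_neq // mul0mx mulmx0.
  by rewrite !mx_at_id -mulmxA hA mulmxA hS -mulmxA.
- case: (eqVneq (qtail a) i) => [<-|ne]; last by rewrite !mx_at_neq // mul0mx mulmx0.
  by rewrite !mx_at_id -mulmxA hS mulmxA hA -mulmxA.
Qed.

End Relations.

Section QuiverInf.
Variables (K : fieldType) (Q : quiver) (v : vertex Q) (lam : vertex Q -> K).
Local Notation Qinf := (quiver_inf v).
Local Notation S_oo := (S_inf K v).

Lemma Xc_inf_None (X : drep K Qinf) :
  @Xc K Qinf (lam_inf lam) X None = - (rA X None *m rS X None).
Proof.
rewrite /Xc !(@sum_option _ (arrow Q)) /=.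
rewrite mx_at_neq // big1 ?addr0 => [|a _]; last by rewrite mx_at_neq.
rewrite mx_at_id big1 ?addr0 => [|a _]; last by rewrite mx_at_neq.
by rewrite raddf0 subr0 sub0r.
Qed.

Lemma Xc_inf_Some (X : drep K Qinf) (i : vertex Q) :
  @Xc K Qinf (lam_inf lam) X (Some i) =
  Xc lam (forget X) i
  + @mx_at K _ (fun k => rdim X (Some k)) i v (rS X None *m rA X None).
Proof.
rewrite /Xc !(@sum_option _ (arrow Q)) /=.
rewrite [Z in _ - (Z + _) - _]mx_at_neq // add0r !mx_at_Some.
under eq_bigr do rewrite mx_at_Some.
under [Z in _ - Z - _]eq_bigr do rewrite mx_at_Some.
by rewrite [RHS]addrC !addrA.
Qed.

Lemma Xc_forget_v (X : drep K Qinf) : @is_module K Qinf (lam_inf lam) X ->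
  Xc lam (forget X) v = - (rS X None *m rA X None).
Proof.
by move=> Xmod; apply/eqP; rewrite -addr_eq0 -(Xmod (Some v)) Xc_inf_Some mx_at_id.
Qed.

Lemma lam_dot_forget (X : drep K Qinf) :
  @lam_dot K Qinf (lam_inf lam) X = lam_dot lam (forget X).
Proof. by rewrite /lam_dot (@sum_option _ (vertex Q)) /= mul0r add0r. Qed.

Lemma hom_from_S_inf_eq0P (X : drep K Qinf) :
  (forall f, @is_hom K _ S_oo X f -> forall o, f o = 0) <-> row_free (rA X None).
Proof.
split=> [homS0|freeA f hom_f [i|]]; last 2 first.
- exact: flatmx_eq.
- have [hA _] := hom_f None.
  apply/eqP; rewrite -(mulmx_free_eq0 _ freeA) -hA /=.
  by rewrite mulmx_thin0.
apply/negPn/negP => /row_free_nz_ker[x x_neq0 xA0].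
pose f o : 'M[K]_(rdim S_oo o, rdim X o) := if o is None then x else 0.
have hom_f : is_hom f.
  by case=> [a|]; split; try exact: flatmx_eq; rewrite /= xA0 mulmx_thin0.
by have /= x0 := homS0 f hom_f None; rewrite x0 eqxx in x_neq0.
Qed.

Lemma hom_to_S_inf_eq0P (X : drep K Qinf) :
  (forall f, @is_hom K _ X S_oo f -> forall o, f o = 0) <-> row_free (rS X None)^T.
Proof.
split=> [homS0|freeST f hom_f [i|]]; last 2 first.
- exact: thinmx_eq.
- have [_ hS] := hom_f None.
  apply/eqP; rewrite -trmx_eq0 -(mulmx_free_eq0 _ freeST) -trmx_mul hS /=.
  by rewrite mulmx_thin0 ?trmx0.
apply/negPn/negP => /row_free_nz_ker[x x_neq0 xST0].
pose f o : 'M[K]_(rdim X o, rdim S_oo o) := if o is None then x^T else 0.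
have hom_f : is_hom f.
  case=> [a|]; split; try exact: thinmx_eq.
  by rewrite /= [RHS]mulmx_thin0 // -[LHS]trmxK trmx_mul trmxK xST0 trmx0.
by have /= xT0 := homS0 f hom_f None; rewrite -trmx_eq0 xT0 eqxx in x_neq0.
Qed.

Lemma forget_nearly_rep (X : drep K Qinf) :
  in_C1 lam X -> nearly_rep lam v (forget X).
Proof.
case=> Xmod _ _ dim_le1; split.
- by rewrite -lam_dot_forget module_lam_dot0.
- by move=> i ne; have := Xmod (Some i); rewrite Xc_inf_Some mx_at_neq ?addr0 // eq_sym.
- rewrite Xc_forget_v // mxrank_opp (leq_trans (mxrankM_maxl _ _)) //.
  exact: leq_trans (rank_leq_col _) dim_le1.
Qed.

Lemma forget_faithful (X Y : drep K Qinf) (f g : forall o, 'M[K]_(rdim X o, rdim Y o)) :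
  in_C1 lam Y -> is_hom f -> is_hom g ->
  (forall i, forget_hom f i = forget_hom g i) -> forall o, f o = g o.
Proof.
case=> _ _ /hom_from_S_inf_eq0P freeA _ hom_f hom_g fg_eq [i|]; first exact: fg_eq.
have [hf _] := hom_f None; have [hg _] := hom_g None.
apply/eqP; rewrite -subr_eq0 -(mulmx_free_eq0 _ freeA) mulmxBl -hf -hg /=.
by rewrite [f _]fg_eq subrr.
Qed.

Lemma forget_full (X Y : drep K Qinf)
    (h : forall i, 'M[K]_(rdim (forget X) i, rdim (forget Y) i)) :
    in_C1 lam X -> in_C1 lam Y -> is_hom h ->
  exists f : forall o, 'M[K]_(rdim X o, rdim Y o),
    is_hom f /\ forall i, forget_hom f i = h i.
Proof.
case=> Xmod /hom_to_S_inf_eq0P freeST _ _ [Ymod _ /hom_from_S_inf_eq0P freeA _] hom_h.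
have E : rS X None *m rA X None *m h v = h v *m rS Y None *m rA Y None.
  have := Xc_hom_comm lam hom_h v.
  by rewrite !Xc_forget_v // mulNmx mulmxN mulmxA => /oppr_inj.
have [c [hA hS]] := factor_through_free freeST freeA E.
pose f o : 'M[K]_(rdim X o, rdim Y o) := if o is Some i then h i else c.
by exists f; split=> // -[a|] //; apply: hom_h.
Qed.

Section Extension.
Variable N : drep K Q.
Let M := Xc lam N v.

Definition ext_dim (o : vertex Qinf) : nat :=
  if o is Some i then rdim N i else \rank M.

Definition ext_arrow (a : arrow Qinf) :
    'M[K]_(ext_dim (qtail a), ext_dim (qhead a)) :=
  if a is Some b then rA N b else row_base M.

Definition ext_coarrow (a : arrow Qinf) :
    'M[K]_(ext_dim (qhead a), ext_dim (qtail a)) :=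
  if a is Some b then rS N b else - col_base M.

Definition inf_ext : drep K Qinf := DRep ext_arrow ext_coarrow.

Lemma inf_ext_module : nearly_rep lam v N -> @is_module K Qinf (lam_inf lam) inf_ext.
Proof.
move=> nearN; have [_ XcN0 rank_le1] := nearN; case=> [i|].
- rewrite Xc_inf_Some /= mulNmx mulmx_base.
  case: (eqVneq i v) => [->|ne]; first by rewrite mx_at_id subrr.
  by rewrite mx_at_neq 1?eq_sym // addr0; apply: XcN0.
- rewrite Xc_inf_None /= mulmxN opprK; apply: mx_le1_trace0 => //.
  by rewrite mxtrace_mulC mulmx_base nearly_rep_trace_Xc.
Qed.

Lemma inf_ext_in_C1 : nearly_rep lam v N -> in_C1 lam inf_ext.
Proof.
move=> nearN; have [_ _ rank_le1] := nearN; split=> //.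
- exact: inf_ext_module.
- apply/hom_to_S_inf_eq0P.
  by rewrite /row_free mxrank_tr /= mxrank_opp; apply: col_base_full.
- exact/hom_from_S_inf_eq0P/row_base_free.
Qed.

Lemma forget_inf_ext_iso : is_iso (forget inf_ext) N.
Proof.
exists (fun i => 1%:M), (fun i => 1%:M).
by split=> // [a|a|i|i]; rewrite ?mulmx1 ?mul1mx.
Qed.

End Extension.

Lemma forget_ess_surj (N : drep K Q) : nearly_rep lam v N ->
  exists X : drep K Qinf, in_C1 lam X /\ is_iso (forget X) N.
Proof.
move=> nearN; exists (inf_ext N).
by split; [apply: inf_ext_in_C1 | apply: forget_inf_ext_iso].
Qed.

End QuiverInf.

Theorem lemma3p2 (K : closedFieldType) (Q : quiver) (v : vertex Q)
  (lam : vertex Q -> K) :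
  [/\ (forall X : drep K (quiver_inf v),
         in_C1 lam X -> nearly_rep lam v (forget X)),
      (forall (X Y : drep K (quiver_inf v)) (f g : forall o, 'M[K]_(rdim X o, rdim Y o)),
         in_C1 lam X -> in_C1 lam Y -> is_hom f -> is_hom g ->
         (forall i, forget_hom f i = forget_hom g i) -> forall o, f o = g o),
      (forall (X Y : drep K (quiver_inf v))
              (h : forall i, 'M[K]_(rdim (forget X) i, rdim (forget Y) i)),
         in_C1 lam X -> in_C1 lam Y -> is_hom h ->
         exists f : forall o, 'M[K]_(rdim X o, rdim Y o),
           is_hom f /\ forall i, forget_hom f i = h i) &
      (forall N : drep K Q, nearly_rep lam v N ->
         exists X : drep K (quiver_inf v), in_C1 lam X /\ is_iso (forget X) N)].
Proof.
split.
- exact: forget_nearly_rep.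
- by move=> X Y f g _ YC1; exact: forget_faithful YC1.
- exact: forget_full.
- exact: forget_ess_surj.
Qed.
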